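(* Let $\mathcal{S} \subseteq M_n$ be a quantum graph. Then $\mathcal{S}$ is connected if and only if the classical graph $C_v(\mathcal{S})$ is connected for every orthonormal basis $v=(|v_k\rangle)_{k=1}^n$ of $\mathbb{C}^n$.
   Context: $M_n$ denotes the $n\times n$ complex matrices. A quantum graph on $M_n$ is a linear subspace $\mathcal{S}\subseteq M_n$ closed under adjoints and containing $I_n$; it is connected if $\mathcal{S}^m=M_n$ for some $m\in\mathbb{N}$, where $\mathcal{S}^1=\mathcal{S}$ and $\mathcal{S}^{k+1}=\operatorname{span}\{AB: A\in\mathcal{S}^k, B\in\mathcal{S}\}$. For an ordered orthonormal basis $v=(|v_k\rangle)_{k=1}^n$ of $\mathbb{C}^n$, the confusability graph $C_v(\mathcal{S})$ is the classical graph on vertex set $\{1,\dots,n\}$ in which distinct $i,j$ are adjacent exactly when $\langle v_i|A|v_j\rangle\neq0$ for some $A\in\mathcal{S}$. *)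

From HB Require Import structures.
From mathcomp Require Import all_boot all_order all_algebra all_field.
From mathcomp Require Import reals.
From mathcomp Require Import complex.
From Stdlib Require Import Relations.Relation_Operators.
Set Implicit Arguments. Unset Strict Implicit. Unset Printing Implicit Defensive.
Import Order.TTheory GRing.Theory Num.Theory.
Local Open Scope ring_scope.

Definition adjmx (C : numClosedFieldType) m n (A : 'M[C]_(m, n)) : 'M[C]_(n, m) :=
  (map_mx Num.conj A)^T.

(* Quantum graph on M_n (here M_{n+1}, n+1 >= 1): a subspace closed under
   adjoints containing the identity. *)
Definition quantum_graph (C : numClosedFieldType) n (S : {vspace 'M[C]_n.+1}) : Prop :=
  (1%:M \in S) /\ (forall A, A \in S -> adjmx A \in S).

(* S^m = span{A B : A in S^(m-1), B in S}, S^1 = S  (falgebra's expv). *)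
Definition qconnected (C : numClosedFieldType) n (S : {vspace 'M[C]_n.+1}) : Prop :=
  exists m : nat, (0 < m)%N /\ (S ^+ m)%VS = fullv.

Definition orthonormal_basis (C : numClosedFieldType) k (v : 'I_k -> 'cV[C]_k) : Prop :=
  forall i j, adjmx (v i) *m v j = ((i == j)%:R)%:M.

Definition braket (C : numClosedFieldType) k (v : 'I_k -> 'cV[C]_k) (A : 'M[C]_k) i j : C :=
  (adjmx (v i) *m A *m v j) 0 0.

Definition conf_adj (C : numClosedFieldType) n (S : {vspace 'M[C]_n.+1})
    (v : 'I_n.+1 -> 'cV[C]_n.+1) (i j : 'I_n.+1) : Prop :=
  i <> j /\ exists A, A \in S /\ braket v A i j <> 0.

Definition graph_connected (V : Type) (adj : V -> V -> Prop) : Prop :=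
  forall x y : V, clos_refl_trans V adj x y.

From HB Require Import structures.
From mathcomp Require Import all_boot all_order all_algebra all_field.
From mathcomp Require Import reals complex boolp.
From Stdlib Require Import Relations.Relation_Operators.
Set Implicit Arguments.
Unset Strict Implicit.
Unset Printing Implicit Defensive.
Import Order.TTheory GRing.Theory Num.Theory.
Local Open Scope ring_scope.

(* Since [1 \in S], the powers of [S] increase, so [S] is connected exactly when
   the algebra [agenv S] it generates is all of M_n; by Burnside's theorem this
   happens iff no subspace of row vectors other than 0 and the whole space is
   invariant under [S].  If an orthonormal basis [v] is adapted to a subspace [U]
   (some of the bras [v_i^*] span [U]), then [U] is [S]-invariant iff no [A \in S]
   has [<v_i|A|v_j> != 0] with [v_i^*] inside [U] and [v_j^*] outside.  Hence a
   proper invariant subspace disconnects [C_v(S)] for an adapted [v]; conversely,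
   the bras of the vertices reachable from a given vertex span an invariant
   subspace. *)

Section AlgebraGeneratedBy.
Variables (K : fieldType) (aT : falgType K) (U : {vspace aT}).
Hypothesis U1 : (1 <= U)%VS.

Lemma expv_monotone i j : (i <= j)%N -> (U ^+ i <= U ^+ j)%VS.
Proof.
move=> /subnKC <-; rewrite expvD -{1}[(U ^+ i)%VS]prodv1 prodvSr //.
by rewrite -(expv1n _ (j - i)) expvS.
Qed.

Lemma agenv_sub_expv : (agenv U <= U ^+ \dim {:aT})%VS.
Proof. by apply/subv_sumP => i _; apply: expv_monotone; apply: ltnW. Qed.

End AlgebraGeneratedBy.

Lemma qconnected_agenvP (C : numClosedFieldType) n (S : {vspace 'M[C]_n.+1}) :
  1%:M \in S -> qconnected S <-> agenv S = fullv.
Proof.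
move=> S1; have {}S1 : (1 <= S)%VS by rewrite -memvE.
split=> [[m [_ Sm]] | Sfull].
  by apply/eqP; rewrite eqEsubv subvf -Sm subX_agenv.
exists (\dim {:'M[C]_n.+1}); split.
  by rewrite (leq_trans _ (dimvS (subvf 1%VS))) // dimv1.
by apply/eqP; rewrite eqEsubv subvf -{1}Sfull agenv_sub_expv.
Qed.

Section Irreducible.
Variables (F : fieldType) (n : nat).

Definition irreducible_mxspace (S : {vspace 'M[F]_n.+1}) :=
  forall m (U : 'M[F]_(m, n.+1)), (forall a, a \in S -> stablemx U a) ->
  U = 0 \/ row_full U.

Lemma irreducible_mxspaceS (S T : {vspace 'M[F]_n.+1}) :
  (S <= T)%VS -> irreducible_mxspace S -> irreducible_mxspace T.
Proof. by move=> /subvP sST irrS m U stabU; apply: irrS => a /sST/stabU. Qed.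

Definition stabv m (U : 'M[F]_(m, n.+1)) : {vspace 'M[F]_n.+1} :=
  lker (linfun (mulmxr (cokermx U) \o mulmx U)).

Lemma mem_stabv m (U : 'M[F]_(m, n.+1)) a : (a \in stabv U) = stablemx U a.
Proof. by rewrite memv_ker lfunE /= submxE mulmxA. Qed.

Lemma stablemx_all m (U : 'M[F]_(m, n.+1)) :
  (forall a, stablemx U a) -> U = 0 \/ row_full U.
Proof.
move=> stabU; have [->|/matrix0Pn[i [j Uij]]] := eqVneq U 0; [by left | right].
rewrite -sub1mx; apply/row_subP => k; rewrite row1.
(* Row [i] of [U *m delta_mx j k] is [U i j *: 'e_k]. *)
have := submx_trans (row_sub i _) (stabU (delta_mx j k)).
rewrite row_mul -(scalerK Uij 'e_k) => /(scalemx_sub (U i j)^-1); congr (_ <= _)%MS.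
apply/rowP => l; rewrite !mxE (bigD1 j) //= big1 => [|t /negbTE ntj].
  by rewrite !mxE eqxx addr0.
by rewrite !mxE ntj mulr0.
Qed.

Lemma agenv_full_irreducible (S : {vspace 'M[F]_n.+1}) :
  agenv S = fullv -> irreducible_mxspace S.
Proof.
move=> Sfull m U stabU; apply: stablemx_all => a.
suff : (agenv S <= stabv U)%VS.
  by rewrite Sfull => /subvP/(_ a (memvf a)); rewrite mem_stabv.
apply: agenv_sub_modl; first by rewrite -memvE mem_stabv mulmx1.
apply/prodvP => s t /stabU sU; rewrite !mem_stabv -mulmxE; exact: stablemxM.
Qed.

End Irreducible.

Lemma stable_eigenvector (C : numClosedFieldType) n (V g : 'M[C]_n) :
  V != 0 -> stablemx V g ->
  exists mu, exists2 z : 'rV_n, z != 0 & (z <= V)%MS && (z <= eigenspace g mu)%MS.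
Proof.
move=> nzV stabV; have rV_gt0 : (0 < \rank V)%N by rewrite lt0n mxrank_eq0.
have [lambda /eigenvalueP[w Ew nz_w]] := eigenvalue_closed (restrictmx V g) rV_gt0.
have : stablemx w (restrictmx V g) by rewrite Ew scalemx_sub.
rewrite stablemx_restrict // => /eigenvectorP[mu z_mu]; exists mu.
exists (w *m row_base V); first by rewrite mulmx_free_eq0 ?row_base_free.
by rewrite z_mu andbT (submx_trans (submxMl _ _)) ?eq_row_base.
Qed.

Section Burnside.
Variables (C : numClosedFieldType) (n : nat) (A : {aspace 'M[C]_n.+1}).
Hypothesis A1 : 1%:M \in A.
Hypothesis irrA : irreducible_mxspace A.

Local Notation b := (vbasis A).

Definition image_mx (f : {linear 'M[C]_n.+1 -> 'rV[C]_n.+1}) : 'M_(\dim A, n.+1) :=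
  \matrix_k f b`_k.

Lemma image_mxP (f : {linear 'M[C]_n.+1 -> 'rV[C]_n.+1}) y :
  reflect (exists2 a, a \in A & f a = y) (y <= image_mx f)%MS.
Proof.
apply: (iffP idP) => [/submxP[c ->] | [a /coord_vbasis -> <-]].
  exists (\sum_k c 0 k *: b`_k).
    by apply: memv_suml => k _; rewrite memvZ // vbasis_mem // memt_nth.
  by rewrite linear_sum mulmx_sum_row; apply: eq_bigr => k _; rewrite linearZ rowK.
rewrite linear_sum; apply: summx_sub => k _; rewrite linearZ scalemx_sub //.
by have := row_sub k (image_mx f); rewrite rowK.
Qed.

Lemma row_transitive (x : 'rV[C]_n.+1) :
  x != 0 -> forall y, exists2 a, a \in A & x *m a = y.
Proof.
move=> nz_x y; apply/image_mxP; set M := image_mx _.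
have stabM a : a \in A -> stablemx M a.
  move=> Aa; apply/row_subP => k; rewrite row_mul rowK -mulmxA.
  apply/image_mxP; exists (b`_k * a); rewrite ?mulmxE //.
  by rewrite memvM // vbasis_mem // memt_nth.
have xM : (x <= M)%MS by apply/image_mxP; exists 1%:M; [exact: A1 | exact: mulmx1].
have [M0 | fullM] := irrA stabM; last exact: submx_full.
by move: xM; rewrite M0 => /submx0null x0; rewrite x0 eqxx in nz_x.
Qed.

Lemma col_transitive (p : 'cV[C]_n.+1) :
  p != 0 -> forall y, exists2 a, a \in A & a *m p = y.
Proof.
(* The rows [w] with [w *m a *m p = 0] for all [a \in A] form an invariant
   subspace; it is not everything since [p != 0], so it is 0. *)
move=> nz_p y; set M := image_mx (trmx \o mulmxr p).
have kerP m (w : 'M_(m, n.+1)) :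
    (w <= kermx M^T)%MS <-> (forall a, a \in A -> w *m a *m p = 0).
  split=> [/sub_kermxP wM a Aa | wAp].
    have /submxP[c Ec] : ((a *m p)^T <= M)%MS by apply/image_mxP; exists a.
    by rewrite -mulmxA -[a *m p]trmxK Ec trmx_mul mulmxA wM mul0mx.
  apply/sub_kermxP/trmx_inj; rewrite trmx_mul trmxK trmx0.
  apply/row_matrixP => k; rewrite row_mul rowK row0 /= -trmx_mul mulmxA wAp //.
    by rewrite trmx0.
  by rewrite vbasis_mem // memt_nth.
have stabK a : a \in A -> stablemx (kermx M^T) a.
  move=> Aa; apply/row_subP => i; rewrite row_mul; apply/kerP => a' Aa'.
  by rewrite -(mulmxA _ a) mulmxE (kerP _ _).1 ?row_sub ?memvM.
have [K0 | fullK] := irrA stabK.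
  have /(submx_full y^T)/image_mxP[a Aa /= Eap] : row_full M.
    by rewrite /row_full -mxrank_tr -[_ == _]/(row_free M^T) -kermx_eq0 K0.
  by exists a => //; rewrite -[y]trmxK -Eap trmxK.
have /kerP/(_ 1%:M A1) : (1%:M <= kermx M^T)%MS by rewrite submx_full.
by rewrite !mul1mx => p0; rewrite p0 eqxx in nz_p.
Qed.

Lemma rank_reduce E : E \in A -> (1 < \rank E)%N ->
  exists2 E', E' \in A & (E' != 0) && (\rank E' < \rank E)%N.
Proof.
(* [z |-> z *m a *m E] maps the row space of [E] into itself; an eigenvector [z]
   of it is killed by [E *m (a *m E - mu%:M)], which is nonzero because it
   would otherwise make [w = u *m a *m E] proportional to [u]. *)
move=> AE rE_gt1; have nzE : E != 0 by rewrite -mxrank_eq0 -lt0n (ltnW rE_gt1).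
have /row_subPn[i0] : ~~ (E <= (0 : 'M_n.+1))%MS by rewrite submx0.
rewrite submx0; set u := row i0 E => nz_u.
have /row_subPn[i1] : ~~ (E <= u)%MS.
  by apply/negP => /mxrankS; rewrite leqNgt (leq_ltn_trans (rank_leq_row u)).
rewrite rowE; set w := _ *m E => w_u.
have [a Aa ua] := row_transitive nz_u (delta_mx 0 i1).
have stabE : stablemx E (a *m E) by rewrite mulmxA submxMl.
have [mu [z nz_z /andP[zE z_mu]]] := stable_eigenvector nzE stabE.
set f := a *m E - mu%:M.
exists (E *m f).
  by rewrite mulmxBr mul_mx_scalar mulmxA rpredB ?rpredZ // !mulmxE !memvM.
apply/andP; split.
  apply: contra w_u => /eqP Ef0.
  have EaE : E *m (a *m E) = mu *: E.
    by apply/eqP; rewrite -subr_eq0 -mul_mx_scalar -mulmxBr -/f Ef0.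
  have /submxP[x ux] : (u <= E)%MS by apply: row_sub.
  by rewrite /w -ua ux -!mulmxA EaE -scalemxAr -ux scalemx_sub.
have z_Ef : (z <= E :&: kermx f)%MS by rewrite sub_capmx zE.
rewrite -(mxrank_mul_ker E f) -[X in (X < _)%N]addn0 ltn_add2l.
by rewrite (leq_trans _ (mxrankS z_Ef)) // lt0n mxrank_eq0.
Qed.

Lemma rank_one_mem : exists2 E, E \in A & \rank E == 1%N.
Proof.
suff rank_ind k E : E \in A -> E != 0 -> (\rank E <= k)%N ->
    exists2 E, E \in A & \rank E == 1%N.
  by apply: (rank_ind n.+1 1%:M A1); rewrite ?rank_leq_row // -mxrank_eq0 mxrank1.
elim: k E => [|k IHk] E AE nzE; first by rewrite leqn0 mxrank_eq0 (negbTE nzE).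
have [rE_le1 _ | rE_gt1 rE_le] := leqP (\rank E) 1.
  by exists E; rewrite // eqn_leq rE_le1 lt0n mxrank_eq0.
have [E' AE' /andP[nzE' rE']] := rank_reduce AE rE_gt1.
by apply: (IHk E') => //; rewrite -ltnS (leq_trans rE').
Qed.

Theorem Burnside : A = fullv :> {vspace 'M[C]_n.+1}.
Proof.
have [E AE /eqP rE] := rank_one_mem.
have nzE : E != 0 by rewrite -mxrank_eq0 rE.
have /row_subPn[k] : ~~ (E <= (0 : 'M_n.+1))%MS by rewrite submx0.
rewrite submx0; set r := row k E => nz_r.
have Er : (E <= r)%MS.
  rewrite -(mxrank_leqif_sup (row_sub k E)) rE.
  by rewrite eqn_leq lt0n mxrank_eq0 nz_r rank_leq_row.
have {Er} Ecr := mulmxKpV Er; set c := E *m pinvmx r in Ecr.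
have nz_c : c != 0 by apply: contraNneq nzE => c0; rewrite -Ecr c0 mul0mx.
have deltaA i j : delta_mx i j \in A.
  have [a Aa ac] := col_transitive nz_c (delta_mx i 0).
  have [b Ab rb] := row_transitive nz_r (delta_mx 0 j).
  rewrite -(mul_delta_mx (0 : 'I_1)) -ac -rb mulmxA -(mulmxA a) Ecr.
  by rewrite !mulmxE !memvM.
apply/vspaceP => M; rewrite memvf (matrix_sum_delta M).
by apply: memv_suml => i _; apply: memv_suml => j _; rewrite memvZ.
Qed.

End Burnside.

Lemma adjmxK (C : numClosedFieldType) m k (M : 'M[C]_(m, k)) : adjmx (adjmx M) = M.
Proof. by apply/matrixP => i j; rewrite !mxE conjCK. Qed.

Section OrthonormalBasis.
Variables (C : numClosedFieldType) (k : nat) (v : 'I_k -> 'cV[C]_k).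

(* For orthonormal [v]: the row space of [U] is spanned by the bras
   [adjmx (v i)] with [Q i]. *)
Definition adapted (Q : pred 'I_k) m (U : 'M[C]_(m, k)) :=
  (forall i, Q i -> (adjmx (v i) <= U)%MS) /\ (forall j, ~~ Q j -> U *m v j = 0).

Hypothesis onb : orthonormal_basis v.

Lemma onb_norm_neq0 i : adjmx (v i) *m v i != 0.
Proof.
rewrite onb eqxx; apply/eqP => /matrixP/(_ 0 0).
by rewrite !mxE /= => /eqP; rewrite oner_eq0.
Qed.

Lemma onb_complete : \sum_i v i *m adjmx (v i) = 1%:M.
Proof.
pose V := \matrix_(i, j) v j i 0.
have VV : adjmx V *m V = 1%:M.
  apply/matrixP => i j; have /matrixP/(_ 0 0) := onb i j.
  by rewrite !mxE eqxx mulr1n => <-; apply: eq_bigr => l _; rewrite !mxE.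
rewrite -(mulmx1C VV); apply/matrixP => a b; rewrite summxE !mxE.
by apply: eq_bigr => l _; rewrite !mxE big_ord1 !mxE.
Qed.

Lemma onb_expand m (M : 'M[C]_(m, k)) : M = \sum_i M *m v i *m adjmx (v i).
Proof.
by under eq_bigr do rewrite -mulmxA; rewrite -mulmx_sumr onb_complete mulmx1.
Qed.

Section Adapted.
Variables (Q : pred 'I_k) (m : nat) (U : 'M[C]_(m, k)).
Hypothesis adaptedU : adapted Q U.

Lemma adapted_stableP a :
  stablemx U a <-> (forall i j, Q i -> ~~ Q j -> braket v a i j = 0).
Proof.
have [QU U_Q] := adaptedU; split=> [stabU i j Qi nQj | cross0].
  rewrite /braket; have /submxP[D ->] := submx_trans (submxMr a (QU i Qi)) stabU.
  by rewrite -mulmxA U_Q ?mulmx0 ?mxE.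
rewrite [U *m a]onb_expand; apply: summx_sub => j _.
have [Qj | nQj] := boolP (Q j); first exact: submx_trans (submxMl _ _) (QU j Qj).
rewrite [U]onb_expand !mulmx_suml big1 ?mul0mx ?sub0mx // => i _.
have [Qi | nQi] := boolP (Q i); last by rewrite U_Q ?mul0mx.
have vav0 : adjmx (v i) *m a *m v j = 0.
  by rewrite [LHS]mx11_scalar -/(braket v a i j) cross0 // raddf0.
by rewrite -!mulmxA (mulmxA a) !(mulmxA (adjmx (v i))) vav0 mul0mx !mulmx0.
Qed.

Lemma adapted_full i : row_full U -> Q i.
Proof.
move=> fullU; apply: contraT => nQi; have [_ U_Q] := adaptedU.
have /submxP[D Dvi] : (adjmx (v i) <= U)%MS by apply: submx_full.
by have := onb_norm_neq0 i; rewrite Dvi -mulmxA U_Q // mulmx0 eqxx.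
Qed.

Lemma adapted_neq0 i : Q i -> U != 0.
Proof.
move=> Qi; apply/eqP => U0; have [QU _] := adaptedU.
have := QU i Qi; rewrite U0 => /submx0null vi0.
by have := onb_norm_neq0 i; rewrite vi0 mul0mx eqxx.
Qed.

End Adapted.

End OrthonormalBasis.

Lemma exists_adapted_onb (C : numClosedFieldType) k m (U : 'M[C]_(m, k)) :
  exists2 v, orthonormal_basis v & adapted v (fun i => (i < \rank U)%N) U.
Proof.
(* Gram-Schmidt bases of [U] and of its orthogonal complement, stacked. *)
pose SC := schmidt_complete U.
have SCu : SC \is unitarymx := schmidt_complete_unitarymx U.
pose c := cast_ord (esym (add_rank_ortho U)).
exists (fun i => adjmx (row (c i) SC)).
  move=> i j; rewrite adjmxK; apply/matrixP => a b; rewrite !ord1.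
  have /matrixP/(_ (c i) (c j)) := unitarymxP SCu.
  rewrite !mxE (inj_eq (@cast_ord_inj _ _ _)) => <-.
  by apply: eq_bigr => l _; rewrite !mxE.
split=> [i /= lt_iU | j /= ge_jU]; rewrite ?adjmxK /SC /schmidt_complete.
  case: (splitP (c i)) => [l El | l El]; last first.
    by move: lt_iU; rewrite -[nat_of_ord i]/(nat_of_ord (c i)) El ltnNge leq_addr.
  have -> : c i = lshift _ l by apply: val_inj.
  rewrite rowKu (submx_trans (row_sub _ _)) //.
  by rewrite (eqmx_schmidt_free (row_base_free U)) eq_row_base.
case: (splitP (c j)) => [l El | l El].
  by move: ge_jU; rewrite -[nat_of_ord j]/(nat_of_ord (c j)) El ltn_ord.
have -> : c j = rshift _ l by apply: val_inj.
rewrite rowKd; set w := row l _.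
have : (w <= orthomx Num.Def.conjC (hermitian1mx k) U)%MS.
  rewrite (submx_trans (row_sub _ _)) //.
  by rewrite (eqmx_schmidt_free (row_base_free _)) eq_row_base.
by rewrite orthomx_sym => /orthomx1P; rewrite /adjmx map_trmx.
Qed.

Lemma clos_rt_invariant (T : Type) (R : T -> T -> Prop) (P : T -> Prop) :
  (forall x y, R x y -> P x -> P y) ->
  forall x y, clos_refl_trans T R x y -> P x -> P y.
Proof. by move=> RP x y; elim=> [u w /RP | // | u w z _ IHuw _ IHwz /IHuw/IHwz]. Qed.

Lemma conf_connected_irreducible (C : numClosedFieldType) n (S : {vspace 'M[C]_n.+1}) :
  (forall v, orthonormal_basis v -> graph_connected (conf_adj S v)) ->
  irreducible_mxspace S.
Proof.
move=> connS m U stabU; have [-> | nzU] := eqVneq U 0; [by left | right].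
apply: contraT => notfullU; have [v onb adaptedU] := exists_adapted_onb U.
have closedU i j : conf_adj S v i j -> (i < \rank U)%N -> (j < \rank U)%N.
  move=> [_ [a [Sa nz_aij]]] Qi; apply/negPn/negP => nQj; apply: nz_aij.
  exact: (adapted_stableP onb adaptedU a).1 (stabU a Sa) i j Qi nQj.
have := clos_rt_invariant closedU (connS v onb ord0 ord_max).
rewrite lt0n mxrank_eq0 nzU => /(_ isT) /=.
by rewrite ltnNge -ltnS ltn_neqAle notfullU rank_leq_col.
Qed.

Lemma irreducible_conf_connected (C : numClosedFieldType) n (S : {vspace 'M[C]_n.+1}) v :
  irreducible_mxspace S -> orthonormal_basis v -> graph_connected (conf_adj S v).
Proof.
move=> irrS onb x y.
pose Q j := `[< clos_refl_trans _ (conf_adj S v) x j >].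
(* The bras of the vertices reachable from [x] span an invariant subspace. *)
pose U := \matrix_j ((Q j)%:R *: adjmx (v j)).
have adaptedU : adapted v Q U.
  split=> [i Qi | j nQj]; first by have := row_sub i U; rewrite rowK Qi scale1r.
  apply/row_matrixP => i; rewrite row_mul rowK row0 -scalemxAl onb.
  have [-> | nij] := eqVneq i j; first by rewrite (negbTE nQj) scale0r.
  by rewrite /= mulr0n raddf0 scaler0.
have stabU a : a \in S -> stablemx U a.
  move=> Sa; apply/(adapted_stableP onb adaptedU) => i j /asboolP xi /asboolPn nxj.
  have [// | nz_aij] := eqVneq (braket v a i j) 0; case: (nxj).
  apply: rt_trans (xi) (rt_step _ _ _ _ _).
  by split; [move=> eij; apply: nxj; rewrite -eij | exists a; split => //; apply/eqP].
have [U0 | fullU] := irrS _ U stabU.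
  have Qx : Q x by apply/asboolP; exact: rt_refl.
  by have := adapted_neq0 onb adaptedU Qx; rewrite U0 eqxx.
by have /asboolP := adapted_full onb adaptedU y fullU.
Qed.

Theorem proposition3p6 (R : realType) (n : nat) (S : {vspace 'M[R[i]]_n.+1}) :
  quantum_graph S ->
  (qconnected S <->
   forall v : 'I_n.+1 -> 'cV[R[i]]_n.+1,
     orthonormal_basis v -> graph_connected (conf_adj S v)).
Proof.
move=> [S1 _]; rewrite qconnected_agenvP //; split=> [Sfull v | connS].
  by apply: irreducible_conf_connected; apply: agenv_full_irreducible.
have agenv1 : 1%:M \in agenv S by rewrite memvE sub1_agenv.
apply: (Burnside agenv1).
exact: irreducible_mxspaceS (sub_agenv S) (conf_connected_irreducible connS).
Qed.
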